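(* Let $S$ be a semigroup with finite $\mathcal{R}$-height whose kernel is completely simple, and let $B$ be a bi-ideal of $S$. Then $\mathrm{H}_{\mathcal{R}}(B)\leq 3\,\mathrm{H}_{\mathcal{R}}(S)-2$.
   Context: For a semigroup $S$, $S^1$ denotes $S$ with an identity adjoined if necessary. Green's preorder: $a\leq_{\mathcal{R}} b$ iff $aS^1\subseteq bS^1$; $\mathcal{R}$ is the associated equivalence; the $\mathcal{R}$-height $\mathrm{H}_{\mathcal{R}}$ of a semigroup is the supremum of the cardinalities of chains in its poset of $\mathcal{R}$-classes. A bi-ideal is a non-empty subset $B$ with $BS^1B\subseteq B$; $\mathrm{H}_{\mathcal{R}}(B)$ is computed in $B$ itself. The kernel of $S$ is its unique minimal ideal; a semigroup is completely simple if it has no proper ideals and has both a minimal right ideal and a minimal left ideal. *)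

From Stdlib Require Import List.
Import ListNotations.

Set Implicit Arguments.

Section Semigroups.
Variable T : Type.
Variable mul : T -> T -> T.

Definition subset (A B : T -> Prop) : Prop := forall x, A x -> B x.
Definition seteq (A B : T -> Prop) : Prop := forall x, A x <-> B x.

(* Green's R-preorder computed inside the subsemigroup A:
   a <=_R b  iff  a A^1 ⊆ b A^1  iff  a = b or a = b s for some s in A. *)
Definition R_le (A : T -> Prop) (a b : T) : Prop :=
  a = b \/ exists s, A s /\ a = mul b s.

Definition R_lt (A : T -> Prop) (a b : T) : Prop :=
  R_le A a b /\ ~ R_le A b a.

(* A chain of R-classes of A, listed as representatives x1 >_R x2 >_R ... >_R xk.
   Chains in the poset of R-classes of cardinality k correspond exactly to such lists
   of length k. *)
Fixpoint R_chain (A : T -> Prop) (s : list T) : Prop :=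
  match s with
  | [] => True
  | x :: s' =>
      A x /\ (match s' with [] => True | y :: _ => R_lt A y x end) /\ R_chain A s'
  end.

(* The R-height of A equals the natural number n (in particular it is finite):
   n is the supremum (here a maximum) of the cardinalities of chains of R-classes. *)
Definition R_height_eq (A : T -> Prop) (n : nat) : Prop :=
  (exists s, R_chain A s /\ length s = n) /\
  (forall s, R_chain A s -> length s <= n).

Definition is_ideal_in (K I : T -> Prop) : Prop :=
  subset I K /\ (exists x, I x) /\
  (forall k i, K k -> I i -> I (mul k i) /\ I (mul i k)).

Definition is_right_ideal_in (K I : T -> Prop) : Prop :=
  subset I K /\ (exists x, I x) /\ (forall i k, I i -> K k -> I (mul i k)).

Definition is_left_ideal_in (K I : T -> Prop) : Prop :=
  subset I K /\ (exists x, I x) /\ (forall k i, K k -> I i -> I (mul k i)).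

Definition is_min_right_ideal_in (K I : T -> Prop) : Prop :=
  is_right_ideal_in K I /\ forall J, is_right_ideal_in K J -> subset J I -> seteq J I.

Definition is_min_left_ideal_in (K I : T -> Prop) : Prop :=
  is_left_ideal_in K I /\ forall J, is_left_ideal_in K J -> subset J I -> seteq J I.

Definition completely_simple (K : T -> Prop) : Prop :=
  (exists x, K x) /\
  (forall x y, K x -> K y -> K (mul x y)) /\
  (forall I, is_ideal_in K I -> seteq I K) /\
  (exists I, is_min_right_ideal_in K I) /\
  (exists I, is_min_left_ideal_in K I).

Definition is_kernel (K : T -> Prop) : Prop :=
  is_ideal_in (fun _ => True) K /\ forall I, is_ideal_in (fun _ => True) I -> subset K I.

Definition is_bi_ideal (B : T -> Prop) : Prop :=
  (exists x, B x) /\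
  (forall b b', B b -> B b' -> B (mul b b')) /\
  (forall b s b', B b -> B b' -> B (mul (mul b s) b')).

End Semigroups.

(* Three consecutive strict steps of a chain of R-classes of B give a strict
   step in S, since B S^1 B ⊆ B.  Thus a B-chain of length 3h - 1 thins out to
   an S-chain of length h, ending at some c ∈ B which still has a strict
   B-successor d = c u.  Maximality of h makes c R-minimal in S, and an
   R-minimal element is regular, c = c k c, because the kernel has a minimal
   left ideal.  But then c lies in d B, contradicting d <_R c in B. *)
From Stdlib Require Import List Arith Lia Classical.
Import ListNotations.
Set Implicit Arguments.

Lemma last_cons_default (A : Type) (w x : A) (t : list A) :
  last (w :: t) x = last t w.
Proof.
  revert w x; induction t as [|a t IH]; intros w x; [reflexivity|].
  change (last (a :: t) x = last (a :: t) w).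
  rewrite (IH a x); symmetry; apply IH.
Qed.

Section RChains.
Variable T : Type.
Variable mul : T -> T -> T.
Hypothesis mulA : forall x y z, mul x (mul y z) = mul (mul x y) z.

Local Notation setT := (fun _ : T => True).

Definition R_minimal (c : T) : Prop :=
  forall y, R_le mul setT y c -> R_le mul setT c y.

Lemma R_lt_exists_mul (A : T -> Prop) a b :
  R_lt mul A a b -> exists u, A u /\ a = mul b u.
Proof.
  intros [[E|H] N]; [|exact H].
  exfalso; apply N; left; auto.
Qed.

Lemma R_le_subset (A A' : T -> Prop) a b :
  subset A A' -> R_le mul A a b -> R_le mul A' a b.
Proof. intros HA [E|[s [As E]]]; [left|right; exists s]; auto. Qed.

Lemma R_le_trans (A : T -> Prop) (Amul : forall x y, A x -> A y -> A (mul x y)) a b c :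
  R_le mul A a b -> R_le mul A b c -> R_le mul A a c.
Proof.
  intros [E|[s [As E]]] [F|[t [At F]]].
  - left; congruence.
  - right; exists t; split; auto; congruence.
  - right; exists s; split; auto; congruence.
  - right; exists (mul t s); split; auto. rewrite E, F, mulA; reflexivity.
Qed.

Lemma R_chain_snoc (A : T -> Prop) x t y :
  R_chain mul A (x :: t) -> A y -> R_lt mul A y (last t x) ->
  R_chain mul A (x :: t ++ [y]).
Proof.
  revert x; induction t as [|w t IH]; intros x Hc Ay Hy.
  - simpl in *; tauto.
  - destruct Hc as [Ax [Hwx Hc]].
    rewrite last_cons_default in Hy.
    split; [exact Ax|]; split; [exact Hwx|].
    apply IH; assumption.
Qed.

Lemma R_height_chain_last_minimal h x t :
  R_height_eq mul setT h -> R_chain mul setT (x :: t) -> length (x :: t) = h ->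
  R_minimal (last t x).
Proof.
  intros [_ Hmax] Hc Hlen y Hy.
  destruct (classic (R_le mul setT (last t x) y)) as [E|N]; [exact E|].
  exfalso.
  assert (Hlong := Hmax _ (R_chain_snoc Hc I (conj Hy N))).
  simpl in Hlen, Hlong; rewrite length_app in Hlong; simpl in Hlong; lia.
Qed.

Section BiIdeal.
Variable B : T -> Prop.
Hypothesis hB : is_bi_ideal mul B.

(* If x ≤_R w in S, then y = x u = w q u = z (v q u) with v q u ∈ B. *)
Lemma bi_ideal_R_lt3 x y z w :
  R_lt mul B y x -> R_lt mul B z y -> R_lt mul B w z -> R_lt mul setT w x.
Proof.
  intros Hyx Hzy Hwz.
  destruct hB as [_ [Bmul Bsandwich]].
  assert (up : forall a b, R_lt mul B a b -> R_le mul setT a b)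
    by (intros a b Hab; apply (R_le_subset (A := B)); [easy|apply Hab]).
  split.
  - apply R_le_trans with z; [easy|auto|].
    apply R_le_trans with y; [easy|auto|auto].
  - intros Hxw.
    destruct (R_lt_exists_mul Hyx) as [u [Bu Eu]].
    destruct (R_lt_exists_mul Hwz) as [v [Bv Ev]].
    apply (proj2 Hzy); right.
    destruct Hxw as [E|[q [_ E]]].
    + exists (mul v u); split; [auto|].
      rewrite Eu, E, Ev, mulA; reflexivity.
    + exists (mul (mul v q) u); split; [auto|].
      rewrite Eu, E, Ev, !mulA; reflexivity.
Qed.

Lemma R_chain_bi_ideal_thin n x s :
  R_chain mul B (x :: s) -> 3 * n + 2 <= length (x :: s) ->
  exists t d, R_chain mul setT (x :: t) /\ length t = n /\
    B (last t x) /\ R_lt mul B d (last t x).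
Proof.
  revert x s; induction n as [|n IH]; intros x s Hc Hlen.
  - destruct s as [|y s]; [simpl in Hlen; lia|].
    destruct Hc as [Bx [Hyx _]].
    exists [], y; simpl; tauto.
  - destruct s as [|y [|z [|w s]]]; try (simpl in Hlen; lia).
    destruct Hc as [_ [Hyx [_ [Hzy [_ [Hwz Hc]]]]]].
    destruct (IH w s Hc) as [t [d [Ht [Htlen Hd]]]]; [simpl in *; lia|].
    exists (w :: t), d; rewrite last_cons_default.
    split; [|simpl; auto].
    split; [exact I|split; [|exact Ht]].
    eapply bi_ideal_R_lt3; eauto.
Qed.

(* R-minimality puts c in d u S^1, so c = c k c lies in d u S^1 c ⊆ d B. *)
Lemma R_minimal_regular_not_R_lt c k d :
  B c -> c = mul (mul c k) c -> R_minimal c -> ~ R_lt mul B d c.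
Proof.
  intros Bc Hreg Hmin Hdc.
  destruct (R_lt_exists_mul Hdc) as [u [Bu Eu]].
  apply (proj2 Hdc); right.
  destruct (Hmin (mul d u)) as [E|[z [_ E]]].
  - right; exists (mul u u); split; auto. rewrite Eu, mulA; reflexivity.
  - exists u; auto.
  - exists (mul (mul u (mul z k)) c); split.
    + destruct hB as [_ [_ Bsandwich]]; auto.
    + rewrite Hreg at 1; rewrite E at 1; rewrite !mulA; reflexivity.
Qed.

End BiIdeal.

(* With l ∈ L, the left ideal K c l of K lies in L, so l = k c l for some
   k ∈ K; and c l ≤_R c gives c = c l z (or c = c l). *)
Lemma R_minimal_regular (K L : T -> Prop) c :
  is_ideal_in mul setT K -> is_min_left_ideal_in mul K L -> R_minimal c ->
  exists k, c = mul (mul c k) c.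
Proof.
  intros [_ [_ Kideal]] [[LK [[l Ll] Lleft]] Lmin] Hmin.
  assert (Kl : K l) by auto.
  set (J := fun y => exists k, K k /\ y = mul (mul k c) l).
  assert (HJ : is_left_ideal_in mul K J).
  { split; [|split].
    - intros y [k [Kk ->]]; apply (Kideal _ _ I Kl).
    - exists (mul (mul l c) l), l; auto.
    - intros k' y Kk' [k [Kk ->]]; exists (mul k' k); split.
      + apply (Kideal _ _ I Kk).
      + rewrite !mulA; reflexivity. }
  assert (HJL : subset J L).
  { intros y [k [Kk ->]]; apply Lleft; auto; apply (Kideal c k I Kk). }
  destruct (proj2 (Lmin J HJ HJL l) Ll) as [k [_ El]].
  exists k.
  destruct (Hmin (mul c l)) as [E|[z [_ E]]]; [right; exists l; auto| |].
  - rewrite E at 1; rewrite El, !mulA, <- (mulA (mul c k) c l), <- E; reflexivity.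
  - rewrite E at 1; rewrite El.
    replace (mul (mul c (mul (mul k c) l)) z) with (mul (mul c k) (mul (mul c l) z))
      by (rewrite !mulA; reflexivity).
    rewrite <- E; reflexivity.
Qed.

End RChains.

Theorem corollary3p4 (T : Type) (mul : T -> T -> T)
  (mulA : forall x y z, mul x (mul y z) = mul (mul x y) z)
  (h : nat) (hS : R_height_eq mul (fun _ => True) h)
  (K : T -> Prop) (hK : is_kernel mul K) (hKcs : completely_simple mul K)
  (B : T -> Prop) (hB : is_bi_ideal mul B) :
  forall s : list T, R_chain mul B s -> length s <= 3 * h - 2.
Proof.
  intros [|x s] Hs; [simpl; lia|].
  assert (h_pos : 1 <= h) by (apply (proj2 hS [x]); simpl; tauto).
  destruct (Nat.le_gt_cases (length (x :: s)) (3 * h - 2)) as [ok|long]; [exact ok|].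
  exfalso.
  destruct (R_chain_bi_ideal_thin mulA hB (h - 1) Hs) as [t [d [Ht [Htlen [Bc Hdc]]]]];
    [lia|].
  assert (Hmin : R_minimal mul (last t x)).
  { apply (R_height_chain_last_minimal hS Ht); simpl; lia. }
  destruct hK as [HK _].
  destruct hKcs as [_ [_ [_ [_ [L HL]]]]].
  destruct (R_minimal_regular mulA HK HL Hmin) as [k Hreg].
  exact (R_minimal_regular_not_R_lt mulA hB k Bc Hreg Hmin Hdc).
Qed.
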